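(* Let $\Gamma\Rightarrow\Delta$ be a saturated upper sequent of a branch $\mathcal{B}$ of a derivation in $\mathsf{CL}$ (with L$>^\star$ and Mon$\forall$) of a sequent $\Rightarrow x_0:A_0$. Then there exist a finite neighbourhood model $\mathcal{M}$ and a realization $(\rho,\sigma)$ of the labels of the branch such that $\mathcal{M}\vDash_{\rho,\sigma}\mathcal{F}$ for every $\mathcal{F}\in\downarrow\Gamma$ and $\mathcal{M}\nvDash_{\rho,\sigma}\mathcal{F}$ for every $\mathcal{F}\in\downarrow\Delta$.
   Context: Syntax: world labels, neighbourhood labels; relational atoms $a\in N(x)$, $x\in a$, $a\subseteq b$; labelled formulas: these, $x:A$, $a\Vdash^\exists A$, $a\Vdash^\forall A$, $x\Vdash_aA|B$, for $A,B\in\mathcal{L}::=p\mid\bot\mid A\wedge B\mid A\lor B\mid A\to B\mid A>B$. The calculus (premisses / conclusion; ''fresh'': label not in conclusion): initial sequents $x:p,\Gamma\Rightarrow\Delta,x:p$, $x:\bot,\Gamma\Rightarrow\Delta$; G3 rules for $\wedge,\vee,\to$; L$\forall$: $x:A,x\in a,a\Vdash^\forall A,\Gamma\Rightarrow\Delta$ / $x\in a,a\Vdash^\forall A,\Gamma\Rightarrow\Delta$; R$\forall$ (x fresh): $x\in a,\Gamma\Rightarrow\Delta,x:A$ / $\Gamma\Rightarrow\Delta,a\Vdash^\forall A$; L$\exists$ (x fresh): $x\in a,x:A,\Gamma\Rightarrow\Delta$ / $a\Vdash^\exists A,\Gamma\Rightarrow\Delta$; R$\exists$: $x\in a,\Gamma\Rightarrow\Delta,x:A,a\Vdash^\exists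 A$ / $x\in a,\Gamma\Rightarrow\Delta,a\Vdash^\exists A$; R$>$ (a fresh): $a\in N(x),a\Vdash^\exists A,\Gamma\Rightarrow\Delta,x\Vdash_aA|B$ / $\Gamma\Rightarrow\Delta,x:A>B$; L$>^\star$: $a\in N(x),x:A>B,\Gamma\Rightarrow\Delta,a\Vdash^\exists A$ and $a\Vdash^\exists A,x\Vdash_aA|B,a\in N(x),x:A>B,\Gamma\Rightarrow\Delta$ / $a\in N(x),x:A>B,\Gamma\Rightarrow\Delta$; R$|$: $c\in N(x),c\subseteq a,\Gamma\Rightarrow\Delta,x\Vdash_aA|B,c\Vdash^\exists A$ and $c\in N(x),c\subseteq a,\Gamma\Rightarrow\Delta,x\Vdash_aA|B,c\Vdash^\forall A\to B$ / $c\in N(x),c\subseteq a,\Gamma\Rightarrow\Delta,x\Vdash_aA|B$; L$|$ (c fresh): $c\in N(x),c\subseteq a,c\Vdash^\exists A,c\Vdash^\forall A\to B,\Gamma\Rightarrow\Delta$ / $x\Vdash_aA|B,\Gamma\Rightarrow\Delta$; Ref: $a\subseteq a,\Gamma\Rightarrow\Delta$ / $\Gamma\Rightarrow\Delta$; Tr: $c\subseteq a,c\subseteq b,b\subseteq a,\Gamma\Rightarrow\Delta$ / $c\subseteq b,b\subseteq a,\Gamma\Rightarrow\Delta$; L$\subseteq$: $x\in a,a\subseteq b,x\in b,\Gamma\Rightarrow\Delta$ / $x\in a,a\subseteq b,\Gamma\Rightarrow\Delta$; Mon$\forall$: $b\subseteq a,b\Vdash^\forall A,a\Vdash^\forall A,\Gamma\Rightarrow\Delta$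 / $b\subseteq a,a\Vdash^\forall A,\Gamma\Rightarrow\Delta$. For a branch $S_0,\dots,S_k$ with $S_k=\Gamma\Rightarrow\Delta$, $\downarrow\Gamma$ ($\downarrow\Delta$) is the union of the antecedents (succedents) of $S_0,\dots,S_k$. Saturated means: no $x:p$ in $\Gamma\cap\Delta$, no $x:\bot$ in $\Gamma$, and: $x:A\wedge B\in\downarrow\Gamma\Rightarrow x:A,x:B\in\downarrow\Gamma$; $x:A\wedge B\in\downarrow\Delta\Rightarrow x:A$ or $x:B\in\downarrow\Delta$; $x:A\vee B\in\downarrow\Gamma\Rightarrow x:A$ or $x:B\in\downarrow\Gamma$; $x:A\vee B\in\downarrow\Delta\Rightarrow x:A,x:B\in\downarrow\Delta$; $x:A\to B\in\downarrow\Gamma\Rightarrow x:B\in\downarrow\Gamma$ or $x:A\in\downarrow\Delta$; $x:A\to B\in\Delta\Rightarrow x:A\in\downarrow\Gamma$ and $x:B\in\downarrow\Delta$; if $a$ occurs in $\Gamma\cup\Delta$ then $a\subseteq a\in\Gamma$; $a\subseteq b,b\subseteq c\in\Gamma\Rightarrow a\subseteq c\in\Gamma$; $x\in a,a\subseteq b\in\Gamma\Rightarrow x\in b\in\Gamma$; $x\in a,a\Vdash^\forall A\in\Gamma\Rightarrow x:A\in\downarrow\Gamma$; $a\Vdash^\forall A\in\downarrow\Delta\Rightarrow$ some $x$ with $x\in a\in\Gamma$, $x:A\in\downarrow\Delta$; $a\Vdash^\exists A\in\downarrow\Gamma\Rightarrow$ some $x$ with $x\in a\in\Gamma$, $x:A\in\downarrow\Gamma$;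 $x\in a\in\Gamma$, $a\Vdash^\exists A\in\Delta\Rightarrow x:A\in\downarrow\Delta$; $x:A>B\in\downarrow\Delta\Rightarrow$ some $a$ with $a\in N(x)\in\Gamma$, $a\Vdash^\exists A\in\downarrow\Gamma$, $x\Vdash_aA|B\in\Delta$; $a\in N(x),x:A>B\in\Gamma\Rightarrow a\Vdash^\exists A\in\downarrow\Delta$ or ($a\Vdash^\exists A,x\Vdash_aA|B\in\downarrow\Gamma$); $c\in N(x),c\subseteq a\in\Gamma$, $x\Vdash_aA|B\in\Delta\Rightarrow c\Vdash^\exists A\in\Delta$ or $c\Vdash^\forall A\to B\in\downarrow\Delta$; $x\Vdash_aA|B\in\downarrow\Gamma\Rightarrow$ some $c$ with $c\in N(x),c\subseteq a\in\Gamma$, $c\Vdash^\exists A\in\downarrow\Gamma$, $c\Vdash^\forall A\to B\in\Gamma$; $b\subseteq a,a\Vdash^\forall A\in\Gamma\Rightarrow b\Vdash^\forall A\in\Gamma$. Neighbourhood model $\langle W,N,\llbracket\cdot\rrbracket\rangle$: $W\neq\emptyset$, $N:W\to\mathcal{P}(\mathcal{P}(W))$, every $\alpha\in N(x)$ non-empty; $x\Vdash A>B$ iff every $\alpha\in N(x)$ containing an $A$-world has some $\beta\in N(x)$, $\beta\subseteq\alpha$, containing an $A$-world and with all worlds forcing $A\to B$. A realization $(\rho,\sigma)$ maps world labels to worlds and neighbourhood labels to sets of worlds; $\mathcal{M}\vDash_{\rho,\sigma}a\in N(x)$ iff $\sigma(a)\in N(\rho(x))$; $a\subseteq b$ iff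 $\sigma(a)\subseteq\sigma(b)$; $y\in a$ iff $\rho(y)\in\sigma(a)$; $x:A$ iff $\rho(x)\Vdash A$; $a\Vdash^\forall A$ iff all worlds of $\sigma(a)$ force $A$; $a\Vdash^\exists A$ iff some world of $\sigma(a)$ forces $A$; $x\Vdash_aA|B$ iff $\sigma(a)\in N(\rho(x))$ and some $\beta\subseteq\sigma(a)$ contains an $A$-world and all its worlds force $A\to B$. *)

From mathcomp Require Import all_boot.
From Stdlib Require Import Permutation.
Set Implicit Arguments. Unset Strict Implicit. Unset Printing Implicit Defensive.

(* Propositional atoms, world labels and neighbourhood labels are all nat;
   the two label sorts are kept apart by the constructors of [lform]. *)
Definition atom := nat.
Definition wlab := nat.
Definition nlab := nat.

Inductive form : Type :=
| Atom of atom
| Bot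
| And of form & form
| Or  of form & form
| Imp of form & form
| Cnd of form & form.

Inductive lform : Type :=
| InN   of nlab & wlab                 (* a ∈ N(x)        *)
| Mem   of wlab & nlab
| Sub   of nlab & nlab
| WF    of wlab & form                 (* x : A           *)
| AllF  of nlab & form                 (* a ⊩∀ A          *)
| ExF   of nlab & form                 (* a ⊩∃ A          *)
| CondF of wlab & nlab & form & form.  (* x ⊩_a A | B     *)

(* Sequents: pairs of multisets (lists up to permutation). *)
Definition sequent := (list lform * list lform)%type.

Definition wlab_occ (x : wlab) (F : lform) : Prop :=
  match F with
  | InN _ y | Mem y _ | WF y _ | CondF y _ _ _ => y = x
  | _ => False
  end.

Definition nlab_occ (a : nlab) (F : lform) : Prop :=
  match F with
  | InN b _ | Mem _ b | AllF b _ | ExF b _ | CondF _ b _ _ => b = a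
  | Sub b c => b = a \/ c = a
  | WF _ _ => False
  end.

Definition wfresh (x : wlab) (S : sequent) : Prop :=
  forall F, List.In F (S.1 ++ S.2) -> ~ wlab_occ x F.
Definition nfresh (a : nlab) (S : sequent) : Prop :=
  forall F, List.In F (S.1 ++ S.2) -> ~ nlab_occ a F.

Inductive rule_inst : sequent -> list sequent -> Prop :=
| r_init (x : wlab) (p : atom) G D :
    rule_inst (WF x (Atom p) :: G, WF x (Atom p) :: D) [::]
| r_bot (x : wlab) G D :
    rule_inst (WF x Bot :: G, D) [::]
| r_Land x A B G D :
    rule_inst (WF x (And A B) :: G, D) [:: (WF x A :: WF x B :: G, D)]
| r_Rand x A B G D :
    rule_inst (G, WF x (And A B) :: D) [:: (G, WF x A :: D); (G, WF x B :: D)]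
| r_Lor x A B G D :
    rule_inst (WF x (Or A B) :: G, D) [:: (WF x A :: G, D); (WF x B :: G, D)]
| r_Ror x A B G D :
    rule_inst (G, WF x (Or A B) :: D) [:: (G, WF x A :: WF x B :: D)]
| r_Limp x A B G D :
    rule_inst (WF x (Imp A B) :: G, D) [:: (G, WF x A :: D); (WF x B :: G, D)]
| r_Rimp x A B G D :
    rule_inst (G, WF x (Imp A B) :: D) [:: (WF x A :: G, WF x B :: D)]
| r_Lall x a A G D :
    rule_inst (Mem x a :: AllF a A :: G, D)
              [:: (WF x A :: Mem x a :: AllF a A :: G, D)]
| r_Rall x a A G D :
    wfresh x (G, AllF a A :: D) ->
    rule_inst (G, AllF a A :: D) [:: (Mem x a :: G, WF x A :: D)]
| r_Lex x a A G D :
    wfresh x (ExF a A :: G, D) ->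
    rule_inst (ExF a A :: G, D) [:: (Mem x a :: WF x A :: G, D)]
| r_Rex x a A G D :
    rule_inst (Mem x a :: G, ExF a A :: D)
              [:: (Mem x a :: G, WF x A :: ExF a A :: D)]
| r_Rcnd x a A B G D :
    nfresh a (G, WF x (Cnd A B) :: D) ->
    rule_inst (G, WF x (Cnd A B) :: D)
              [:: (InN a x :: ExF a A :: G, CondF x a A B :: D)]
| r_Lcnd_star x a A B G D :
    rule_inst (InN a x :: WF x (Cnd A B) :: G, D)
      [:: (InN a x :: WF x (Cnd A B) :: G, ExF a A :: D);
          (ExF a A :: CondF x a A B :: InN a x :: WF x (Cnd A B) :: G, D)]
| r_Rbar x a c A B G D :
    rule_inst (InN c x :: Sub c a :: G, CondF x a A B :: D)
      [:: (InN c x :: Sub c a :: G, CondF x a A B :: ExF c A :: D);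
          (InN c x :: Sub c a :: G, CondF x a A B :: AllF c (Imp A B) :: D)]
| r_Lbar x a c A B G D :
    nfresh c (CondF x a A B :: G, D) ->
    rule_inst (CondF x a A B :: G, D)
      [:: (InN c x :: Sub c a :: ExF c A :: AllF c (Imp A B) :: G, D)]
| r_Ref a G D :
    rule_inst (G, D) [:: (Sub a a :: G, D)]
| r_Tr a b c G D :
    rule_inst (Sub c b :: Sub b a :: G, D)
              [:: (Sub c a :: Sub c b :: Sub b a :: G, D)]
| r_Lsub x a b G D :
    rule_inst (Mem x a :: Sub a b :: G, D)
              [:: (Mem x a :: Sub a b :: Mem x b :: G, D)]
| r_Mon a b A G D :
    rule_inst (Sub b a :: AllF a A :: G, D)
              [:: (Sub b a :: AllF b A :: AllF a A :: G, D)].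

Definition seq_equiv (S T : sequent) : Prop :=
  Permutation S.1 T.1 /\ Permutation S.2 T.2.

Definition step (S S' : sequent) : Prop :=
  exists C Ps P, rule_inst C Ps /\ seq_equiv S C /\ List.In P Ps /\ seq_equiv S' P.

Definition root_seq (x0 : wlab) (A0 : form) : sequent := ([::], [:: WF x0 A0]).

Definition is_branch (x0 : wlab) (A0 : form) (B : seq sequent) : Prop :=
  [/\ 0 < size B,
      nth (root_seq x0 A0) B 0 = root_seq x0 A0 &
      forall i, i.+1 < size B ->
        step (nth (root_seq x0 A0) B i) (nth (root_seq x0 A0) B i.+1)].

Definition upper (x0 : wlab) (A0 : form) (B : seq sequent) : sequent :=
  last (root_seq x0 A0) B.

Definition downG (B : seq sequent) (F : lform) : Prop :=
  exists S, List.In S B /\ List.In F S.1.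
Definition downD (B : seq sequent) (F : lform) : Prop :=
  exists S, List.In S B /\ List.In F S.2.

Definition saturated (B : seq sequent) (G D : list lform) : Prop :=
  let dG := downG B in let dD := downD B in
  (forall x p, ~ (List.In (WF x (Atom p)) G /\ List.In (WF x (Atom p)) D)) /\
      (forall x, ~ List.In (WF x Bot) G) /\
      (forall x A B', dG (WF x (And A B')) -> dG (WF x A) /\ dG (WF x B')) /\
      (forall x A B', dD (WF x (And A B')) -> dD (WF x A) \/ dD (WF x B')) /\
      (forall x A B', dG (WF x (Or A B')) -> dG (WF x A) \/ dG (WF x B')) /\
      (forall x A B', dD (WF x (Or A B')) -> dD (WF x A) /\ dD (WF x B')) /\
      (forall x A B', dG (WF x (Imp A B')) -> dG (WF x B') \/ dD (WF x A)) /\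
      (forall x A B', List.In (WF x (Imp A B')) D -> dG (WF x A) /\ dD (WF x B')) /\
      (forall a, (exists F, List.In F (G ++ D) /\ nlab_occ a F) ->
                 List.In (Sub a a) G) /\
      (forall a b c, List.In (Sub a b) G -> List.In (Sub b c) G ->
                          List.In (Sub a c) G) /\
          (forall x a b, List.In (Mem x a) G -> List.In (Sub a b) G ->
                          List.In (Mem x b) G) /\
          (forall x a A, List.In (Mem x a) G -> List.In (AllF a A) G ->
                          dG (WF x A)) /\
          (forall a A, dD (AllF a A) ->
                          exists x, List.In (Mem x a) G /\ dD (WF x A)) /\
          (forall a A, dG (ExF a A) ->
                          exists x, List.In (Mem x a) G /\ dG (WF x A)) /\
          (forall x a A, List.In (Mem x a) G -> List.In (ExF a A) D ->
                          dD (WF x A)) /\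
          (forall x A B', dD (WF x (Cnd A B')) ->
                          exists a, [/\ List.In (InN a x) G, dG (ExF a A) &
                                        List.In (CondF x a A B') D]) /\
          (forall x a A B', List.In (InN a x) G -> List.In (WF x (Cnd A B')) G ->
                          dD (ExF a A) \/ (dG (ExF a A) /\ dG (CondF x a A B'))) /\
          (forall x a c A B', List.In (InN c x) G -> List.In (Sub c a) G ->
                          List.In (CondF x a A B') D ->
                          List.In (ExF c A) D \/ dD (AllF c (Imp A B'))) /\
           (forall x a A B', dG (CondF x a A B') ->
                 exists c, [/\ List.In (InN c x) G, List.In (Sub c a) G,
                               dG (ExF c A) & List.In (AllF c (Imp A B')) G]) /\
              (forall a b A, List.In (Sub b a) G -> List.In (AllF a A) G ->
                          List.In (AllF b A) G).

Record nmodel := NModel {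
  W : finType;
  N : W -> {set {set W}};
  V : atom -> {set W};
  W_nonempty : 0 < #|W|;
  N_nonempty : forall (x : W) (alpha : {set W}), alpha \in N x -> alpha != set0
}.

Fixpoint forces (M : nmodel) (w : W M) (A : form) {struct A} : Prop :=
  match A with
  | Atom p => w \in V M p
  | Bot => False
  | And A1 A2 => forces w A1 /\ forces w A2
  | Or A1 A2 => forces w A1 \/ forces w A2
  | Imp A1 A2 => forces w A1 -> forces w A2
  | Cnd A1 A2 =>
      forall alpha, alpha \in N w -> (exists y, y \in alpha /\ forces y A1) ->
        exists beta, [/\ beta \in N w, beta \subset alpha,
                         (exists y, y \in beta /\ forces y A1) &
                         (forall y, y \in beta -> forces y A1 -> forces y A2)]
  end.

Definition lsat (M : nmodel) (rho : wlab -> W M) (sigma : nlab -> {set W M})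
    (F : lform) : Prop :=
  match F with
  | InN a x => sigma a \in N (rho x)
  | Mem y a => rho y \in sigma a
  | Sub a b => sigma a \subset sigma b
  | WF x A => forces (rho x) A
  | AllF a A => forall y, y \in sigma a -> forces y A
  | ExF a A => exists y, y \in sigma a /\ forces y A
  | CondF x a A B =>
      sigma a \in N (rho x) /\
      exists beta, [/\ beta \in N (rho x), beta \subset sigma a,
                       (exists y, y \in beta /\ forces y A) &
                       (forall y, y \in beta -> forces y A -> forces y B)]
  end.

From Pilot Require Import Defs.
From HB Require Import structures.
From mathcomp Require Import all_boot.
From Stdlib Require Import Permutation.
Import Defs.
Set Implicit Arguments. Unset Strict Implicit.

(* The countermodel is read off the branch: its worlds are the world labels
   (together with copies, see [world]), a neighbourhood label a denotes the
   worlds x with x ∈ a in Γ, N(x) consists of the denotations of the a with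
   a ∈ N(x) in Γ, and p holds at x iff x : p ∈ Γ.  Saturation then gives, by
   induction on A, that x : A ∈ ↓Γ forces A and x : A ∈ ↓Δ does not.  Since
   several saturation clauses only speak about the upper sequent, this needs
   two kinds of branch invariants: no rule deletes relational atoms, x : p,
   x : A > B or universal formulas from the antecedent, nor x : p, existential
   or conditional formulas from the succedent, so these reach Γ ⇒ Δ; and a ∈ N(x)
   (resp. x ⊩_a A|B) only enters an antecedent together with some a ⊩∃ A
   (resp. a ∈ N(x)), which makes every neighbourhood non-empty. *)

Definition lform_eq_dec : comparable lform.
Proof. rewrite /comparable /decidable; do !decide equality. Defined.

HB.instance Definition _ := comparableMixin lform_eq_dec.

Lemma InP (T : eqType) (x : T) (s : seq T) : reflect (List.In x s) (x \in s).
Proof.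
elim: s => [|y s IH]; first exact: ReflectF.
rewrite in_cons eq_sym; apply: (iffP orP) => -[/eqP H | /IH H]; by [left | right].
Qed.

Definition persistentL (F : lform) : bool :=
  match F with
  | InN _ _ | Mem _ _ | Sub _ _ | AllF _ _ => true
  | WF _ (Atom _) | WF _ Bot | WF _ (Cnd _ _) => true
  | _ => false
  end.

Definition persistentR (F : lform) : bool :=
  match F with WF _ (Atom _) | ExF _ _ | CondF _ _ _ _ => true | _ => false end.

Definition relational (F : lform) : bool :=
  match F with InN _ _ | Mem _ _ | Sub _ _ => true | _ => false end.

Ltac rule_cases :=
  case; intros;
  repeat match goal with
  | H : _ \/ _ |- _ => case: H => H
  | H : False |- _ => case: H
  | H : ?u = ?u |- _ => clear H
  | H : ?u = _ |- _ => is_var u; subst u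
  | H : _ = ?u |- _ => is_var u; subst u
  | H : _ = _ |- _ => injection H; clear H; intros
  | |- _ => progress simpl in *
  end; try discriminate; first [tauto | by eauto 6].

Lemma rule_persistL C Ps P F : rule_inst C Ps -> List.In P Ps ->
  persistentL F -> List.In F C.1 -> List.In F P.1.
Proof. rule_cases. Qed.

Lemma rule_persistR C Ps P F : rule_inst C Ps -> List.In P Ps ->
  persistentR F -> List.In F C.2 -> List.In F P.2.
Proof. rule_cases. Qed.

Lemma rule_impR C Ps P x A B : rule_inst C Ps -> List.In P Ps ->
  List.In (WF x (Imp A B)) C.2 ->
  List.In (WF x (Imp A B)) P.2 \/ List.In (WF x A) P.1 /\ List.In (WF x B) P.2.
Proof. rule_cases. Qed.

Lemma rule_InN C Ps P a x : rule_inst C Ps -> List.In P Ps ->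
  List.In (InN a x) P.1 -> List.In (InN a x) C.1 \/ exists A, List.In (ExF a A) P.1.
Proof. rule_cases. Qed.

Lemma rule_CondF C Ps P x a A B : rule_inst C Ps -> List.In P Ps ->
  List.In (CondF x a A B) P.1 -> List.In (CondF x a A B) C.1 \/ List.In (InN a x) P.1.
Proof. rule_cases. Qed.

Lemma rule_succ C Ps P F : rule_inst C Ps -> List.In P Ps ->
  List.In F P.2 -> List.In F C.2 \/ ~~ relational F.
Proof. rule_cases. Qed.

Lemma seq_equiv_In1 S T F : seq_equiv S T -> List.In F S.1 <-> List.In F T.1.
Proof. by case=> E _; split; apply: Permutation_in; last exact: Permutation_sym. Qed.

Lemma seq_equiv_In2 S T F : seq_equiv S T -> List.In F S.2 <-> List.In F T.2.
Proof. by case=> _ E; split; apply: Permutation_in; last exact: Permutation_sym. Qed.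

Lemma step_persistL S S' F :
  step S S' -> persistentL F -> List.In F S.1 -> List.In F S'.1.
Proof.
case=> C [Ps [P [HC [ES [HP ES']]]]].
rewrite (seq_equiv_In1 _ ES) (seq_equiv_In1 _ ES'); exact: rule_persistL HC HP.
Qed.

Lemma step_persistR S S' F :
  step S S' -> persistentR F -> List.In F S.2 -> List.In F S'.2.
Proof.
case=> C [Ps [P [HC [ES [HP ES']]]]].
rewrite (seq_equiv_In2 _ ES) (seq_equiv_In2 _ ES'); exact: rule_persistR HC HP.
Qed.

Lemma step_impR S S' x A B : step S S' -> List.In (WF x (Imp A B)) S.2 ->
  List.In (WF x (Imp A B)) S'.2 \/ List.In (WF x A) S'.1 /\ List.In (WF x B) S'.2.
Proof.
case=> C [Ps [P [HC [ES [HP ES']]]]].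
rewrite (seq_equiv_In2 _ ES) (seq_equiv_In1 _ ES') !(seq_equiv_In2 _ ES').
exact: rule_impR HC HP.
Qed.

Lemma step_InN S S' a x : step S S' -> List.In (InN a x) S'.1 ->
  List.In (InN a x) S.1 \/ exists A, List.In (ExF a A) S'.1.
Proof.
case=> C [Ps [P [HC [ES [HP ES']]]]].
rewrite (seq_equiv_In1 _ ES) (seq_equiv_In1 _ ES') => /(rule_InN HC HP).
by case=> [|[A /(seq_equiv_In1 _ ES') HA]]; [left | right; exists A].
Qed.

Lemma step_CondF S S' x a A B : step S S' -> List.In (CondF x a A B) S'.1 ->
  List.In (CondF x a A B) S.1 \/ List.In (InN a x) S'.1.
Proof.
case=> C [Ps [P [HC [ES [HP ES']]]]].
rewrite (seq_equiv_In1 _ ES) !(seq_equiv_In1 _ ES'); exact: rule_CondF HC HP.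
Qed.

Lemma step_succ S S' F : step S S' -> List.In F S'.2 -> List.In F S.2 \/ ~~ relational F.
Proof.
case=> C [Ps [P [HC [ES [HP ES']]]]].
rewrite (seq_equiv_In2 _ ES) (seq_equiv_In2 _ ES'); exact: rule_succ HC HP.
Qed.

Section Branch.
Variables (x0 : wlab) (A0 : form) (B : seq sequent).
Hypothesis branchB : is_branch x0 A0 B.
Local Notation root := (root_seq x0 A0).
Local Notation U := (upper x0 A0 B).

Lemma branch_fwd_ind (P : sequent -> Prop) :
  P root -> (forall S S', List.In S' B -> step S S' -> P S -> P S') ->
  forall S, List.In S B -> P S.
Proof.
case: branchB => _ B0 Bstep P0 HP S /InP /(nthP root) [i Hi <-].
elim: i Hi => [|i IH] Hi; first by rewrite B0.
by apply: HP (Bstep i Hi) (IH (ltnW Hi)); apply/InP; rewrite mem_nth.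
Qed.

Lemma branch_bwd_ind (P : sequent -> Prop) :
  P U -> (forall S S', List.In S' B -> step S S' -> P S' -> P S) ->
  forall S, List.In S B -> P S.
Proof.
case: branchB => _ _ Bstep PU HP S /InP /(nthP root) [i Hi <-].
suff IH k : forall i, i + k.+1 = size B -> P (nth root B i).
  by apply: (IH (size B - i.+1)); rewrite addnS -addSn subnKC.
elim: k => [|k IH] {Hi}i Hik.
  by move: PU; rewrite /upper -nth_last -Hik addn1.
have Hi : i.+1 < size B by rewrite -Hik !addnS !ltnS leq_addr.
apply: HP (Bstep i Hi) (IH i.+1 _); first by apply/InP; rewrite mem_nth.
by rewrite addSnnS.
Qed.

Lemma upper_In : List.In U B.
Proof.
case: branchB => B_gt0 _ _; apply/InP; rewrite /upper -nth_last mem_nth //.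
by rewrite prednK.
Qed.

Lemma downG_upper F : List.In F U.1 -> downG B F.
Proof. by exists U; split; first exact: upper_In. Qed.

Lemma downG_persistL F : downG B F -> persistentL F -> List.In F U.1.
Proof.
case=> S [HS HF]; move: S HS F HF; apply: branch_bwd_ind => // S S' _ Hstep IH F HF HP.
exact: IH (step_persistL Hstep HP HF) HP.
Qed.

Lemma downD_persistR F : downD B F -> persistentR F -> List.In F U.2.
Proof.
case=> S [HS HF]; move: S HS F HF; apply: branch_bwd_ind => // S S' _ Hstep IH F HF HP.
exact: IH (step_persistR Hstep HP HF) HP.
Qed.

Lemma downD_impR :
  (forall x A B', List.In (WF x (Imp A B')) U.2 -> downG B (WF x A) /\ downD B (WF x B')) ->
  forall x A B', downD B (WF x (Imp A B')) -> downG B (WF x A) /\ downD B (WF x B').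
Proof.
move=> satU x A B' [S [HS HF]]; move: S HS x A B' HF; apply: branch_bwd_ind => //.
move=> S S' HS' Hstep IH x A B' /(step_impR Hstep) [/IH // | [HA HB]].
by split; exists S'.
Qed.

Lemma downG_InN_ExF a x : downG B (InN a x) -> exists A, downG B (ExF a A).
Proof.
case=> S [HS HF]; move: S HS a x HF; apply: branch_fwd_ind => [a x [] | S S' HS' Hstep IH a x].
by case/(step_InN Hstep) => [/IH // | [A HA]]; exists A, S'.
Qed.

Lemma In_CondF_InN S x a A B' :
  List.In S B -> List.In (CondF x a A B') S.1 -> List.In (InN a x) S.1.
Proof.
move=> HS; move: S HS x a A B'.
apply: branch_fwd_ind => [x a A B' [] | S S' _ Hstep IH x a A B'].
by case/(step_CondF Hstep) => [/IH HF | //]; apply: step_persistL Hstep _ HF.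
Qed.

Lemma downG_CondF_InN x a A B' : downG B (CondF x a A B') -> List.In (InN a x) U.1.
Proof.
case=> S [HS HF]; apply: downG_persistL => //.
by exists S; split; last exact: In_CondF_InN HF.
Qed.

Lemma downD_not_relational F : downD B F -> ~~ relational F.
Proof.
case=> S [HS HF]; move: S HS F HF.
apply: branch_fwd_ind => [F [<- | []] // | S S' _ Hstep IH F].
by case/(step_succ Hstep) => [/IH | ].
Qed.

End Branch.

Definition max_label (F : lform) : nat :=
  match F with
  | InN a x | Mem x a | CondF x a _ _ => maxn x a
  | Sub a b => maxn a b
  | WF x _ => x
  | AllF a _ | ExF a _ => a
  end.

Definition branch_bound (B : seq sequent) : nat :=
  \max_(S <- B) \max_(F <- S.1 ++ S.2) max_label F.

Lemma max_label_le_branch_bound B S F :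
  List.In S B -> List.In F (S.1 ++ S.2) -> max_label F <= branch_bound B.
Proof.
move=> /InP HS /InP HF; apply: leq_trans (leq_bigmax_seq _ HS isT).
exact: leq_bigmax_seq _ HF isT.
Qed.

Lemma downG_bound B F : downG B F -> max_label F <= branch_bound B.
Proof.
by case=> S [HS HF]; apply: max_label_le_branch_bound HS _; apply: List.in_or_app; left.
Qed.

Lemma downD_bound B F : downD B F -> max_label F <= branch_bound B.
Proof.
by case=> S [HS HF]; apply: max_label_le_branch_bound HS _; apply: List.in_or_app; right.
Qed.

Section Countermodel.
Variables (dG dD : lform -> Prop) (G D : seq lform) (n : nat).
Hypotheses
  (G_dG : forall F, List.In F G -> dG F)
  (dG_bound : forall F, dG F -> max_label F <= n)
  (dD_bound : forall F, dD F -> max_label F <= n)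
  (dG_persistL : forall F, dG F -> persistentL F -> List.In F G)
  (dD_persistR : forall F, dD F -> persistentR F -> List.In F D)
  (dD_not_relational : forall F, dD F -> ~~ relational F)
  (dG_InN_ExF : forall a x, dG (InN a x) -> exists A, dG (ExF a A))
  (dG_CondF_InN : forall x a A B, dG (CondF x a A B) -> List.In (InN a x) G)
  (sat_atom : forall x p, ~ (List.In (WF x (Atom p)) G /\ List.In (WF x (Atom p)) D))
  (sat_bot : forall x, ~ List.In (WF x Bot) G)
  (sat_andL : forall x A B, dG (WF x (And A B)) -> dG (WF x A) /\ dG (WF x B))
  (sat_andR : forall x A B, dD (WF x (And A B)) -> dD (WF x A) \/ dD (WF x B))
  (sat_orL : forall x A B, dG (WF x (Or A B)) -> dG (WF x A) \/ dG (WF x B))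
  (sat_orR : forall x A B, dD (WF x (Or A B)) -> dD (WF x A) /\ dD (WF x B))
  (sat_impL : forall x A B, dG (WF x (Imp A B)) -> dG (WF x B) \/ dD (WF x A))
  (sat_impR : forall x A B, dD (WF x (Imp A B)) -> dG (WF x A) /\ dD (WF x B))
  (sat_ref : forall a, (exists F, List.In F (G ++ D) /\ nlab_occ a F) ->
     List.In (Sub a a) G)
  (sat_tr : forall a b c, List.In (Sub a b) G -> List.In (Sub b c) G ->
     List.In (Sub a c) G)
  (sat_sub : forall x a b, List.In (Mem x a) G -> List.In (Sub a b) G ->
     List.In (Mem x b) G)
  (sat_allL : forall x a A, List.In (Mem x a) G -> List.In (AllF a A) G -> dG (WF x A))
  (sat_allR : forall a A, dD (AllF a A) -> exists x, List.In (Mem x a) G /\ dD (WF x A))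
  (sat_exL : forall a A, dG (ExF a A) -> exists x, List.In (Mem x a) G /\ dG (WF x A))
  (sat_exR : forall x a A, List.In (Mem x a) G -> List.In (ExF a A) D -> dD (WF x A))
  (sat_cndR : forall x A B, dD (WF x (Cnd A B)) ->
     exists a, [/\ List.In (InN a x) G, dG (ExF a A) & List.In (CondF x a A B) D])
  (sat_cndL : forall x a A B, List.In (InN a x) G -> List.In (WF x (Cnd A B)) G ->
     dD (ExF a A) \/ dG (ExF a A) /\ dG (CondF x a A B))
  (sat_barR : forall x a c A B, List.In (InN c x) G -> List.In (Sub c a) G ->
     List.In (CondF x a A B) D -> List.In (ExF c A) D \/ dD (AllF c (Imp A B)))
  (sat_barL : forall x a A B, dG (CondF x a A B) -> exists c,
     [/\ List.In (InN c x) G, List.In (Sub c a) G, dG (ExF c A) &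
         List.In (AllF c (Imp A B)) G]).

Lemma G_label_bound F : List.In F G -> max_label F <= n.
Proof. by move/G_dG; apply: dG_bound. Qed.

(* [(x, None)] is the world of label [x]; its copy [(x, Some c)] lies in the
   denotation of [a] only if moreover c ⊆ a is in [G].  The copies turn semantic
   inclusion of neighbourhoods into syntactic inclusion ([nbhd_subset_Sub]),
   which the R| clause needs. *)
Definition world := ('I_n.+1 * option 'I_n.+1)%type.

Definition nbhd (a : nlab) : {set world} :=
  [set w : world | (Mem w.1 a \in G) && (if w.2 is Some c then Sub c a \in G else true)].

Definition nbhds (w : world) : {set {set world}} :=
  [set nbhd a | a : 'I_n.+1 & InN a w.1 \in G].

Definition valuation (p : atom) : {set world} := [set w : world | WF w.1 (Atom p) \in G].

Lemma world_nonempty : 0 < #|{: world}|.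
Proof. by apply/card_gt0P; exists (ord0, None). Qed.

Definition rho (y : wlab) : world := (inord y, None).

Lemma rho_nbhd y a : List.In (Mem y a) G -> rho y \in nbhd a.
Proof.
move=> Hya; have := G_label_bound Hya; rewrite /= geq_max => /andP[y_le _].
by rewrite inE /= inordK // andbT; apply/InP.
Qed.

Lemma nbhd_Mem w a : w \in nbhd a -> List.In (Mem w.1 a) G.
Proof. by rewrite inE => /andP[/InP]. Qed.

Lemma nbhds_nonempty w al : al \in nbhds w -> al != set0.
Proof.
case/imsetP=> a; rewrite inE => /InP/G_dG/dG_InN_ExF[A /sat_exL[y [Hya _]]] ->.
by apply/set0Pn; exists (rho y); apply: rho_nbhd.
Qed.

Definition model : nmodel := @NModel world nbhds valuation world_nonempty nbhds_nonempty.

Lemma nbhd_subset a b : List.In (Sub a b) G -> nbhd a \subset nbhd b.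
Proof.
move=> Hab; apply/subsetP => -[y c]; rewrite !inE /= => /andP[/InP Hya Hca].
apply/andP; split; first by apply/InP; exact: sat_sub Hya Hab.
by case: c Hca => // c /InP Hca; apply/InP; exact: sat_tr Hca Hab.
Qed.

Lemma nbhd_subset_Sub w c a :
  w \in nbhd c -> nbhd c \subset nbhd a -> List.In (Sub c a) G.
Proof.
move=> /nbhd_Mem Hwc /subsetP sub_ca.
have : max_label (Mem w.1 c) <= n := G_label_bound Hwc.
rewrite /= geq_max => /andP[_ c_le].
have Hcc : List.In (Sub c c) G.
  by apply: sat_ref; exists (Mem w.1 c); split; first exact: List.in_or_app (or_introl Hwc).
have /sub_ca : (w.1, Some (inord c)) \in nbhd c.
  by rewrite inE /= inordK //; apply/andP; split; apply/InP.
by rewrite inE /= inordK // => /andP[_ /InP].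
Qed.

Lemma nbhds_rho x al :
  x <= n -> al \in nbhds (rho x) -> exists2 a, List.In (InN a x) G & al = nbhd a.
Proof. by move=> x_le /imsetP[a]; rewrite inE /= inordK // => /InP Hax ->; exists a. Qed.

Lemma nbhd_in_nbhds a x : List.In (InN a x) G -> nbhd a \in nbhds (rho x).
Proof.
move=> Hax; have := G_label_bound Hax; rewrite /= geq_max => /andP[x_le a_le].
apply/imsetP; exists (inord a); last by rewrite inordK.
by rewrite inE /= !inordK //; apply/InP.
Qed.

Lemma forces_fst (w w' : world) A :
  w.1 = w'.1 -> forces (M := model) w A <-> forces (M := model) w' A.
Proof.
move=> E; elim: A => [p||A IHA B IHB|A IHA B IHB|A IHA B IHB|A _ B _] /=.
- by rewrite !inE E.
- by [].
- by rewrite IHA IHB.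
- by rewrite IHA IHB.
- by rewrite IHA IHB.
- by have -> : nbhds w = nbhds w' by rewrite /nbhds E.
Qed.

Lemma forces_rho (w : world) A : forces (M := model) w A <-> forces (M := model) (rho w.1) A.
Proof. by apply: forces_fst; rewrite /= inord_val. Qed.

Definition cnd_witness (w : world) (al : {set world}) (A B : form) : Prop :=
  exists beta, [/\ beta \in nbhds w, beta \subset al,
    (exists y, y \in beta /\ forces (M := model) y A) &
    (forall y, y \in beta -> forces (M := model) y A -> forces (M := model) y B)].

Definition truthful (A : form) : Prop :=
  forall y, (dG (WF y A) -> forces (M := model) (rho y) A) /\
            (dD (WF y A) -> ~ forces (M := model) (rho y) A).

Lemma dG_ExF_witness a A :
  truthful A -> dG (ExF a A) -> exists w, w \in nbhd a /\ forces (M := model) w A.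
Proof.
by move=> TA /sat_exL[y [Hya /(TA y).1 HyA]]; exists (rho y); split; first exact: rho_nbhd.
Qed.

Lemma dD_ExF_no_witness a A w :
  truthful A -> List.In (ExF a A) D -> w \in nbhd a -> ~ forces (M := model) w A.
Proof. by move=> TA HD /nbhd_Mem Hw /forces_rho; apply: (TA _).2 (sat_exR Hw HD). Qed.

Lemma dG_AllF a A w :
  truthful A -> List.In (AllF a A) G -> w \in nbhd a -> forces (M := model) w A.
Proof. by move=> TA HaA /nbhd_Mem Hw; apply/forces_rho; apply: (TA _).1 (sat_allL Hw HaA). Qed.

Lemma dD_AllF a A :
  truthful A -> dD (AllF a A) -> exists w, w \in nbhd a /\ ~ forces (M := model) w A.
Proof.
by move=> TA /sat_allR[y [Hya /(TA y).2 HyA]]; exists (rho y); split; first exact: rho_nbhd.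
Qed.

Lemma truthful_atom p : truthful (Atom p).
Proof.
move=> y; split=> H /=.
- have y_le : y < n.+1 := dG_bound H.
  by rewrite inE /= inordK //; apply/InP; apply: dG_persistL H _.
- have y_le : y < n.+1 := dD_bound H.
  rewrite inE /= inordK // => /InP HG.
  exact: sat_atom (conj HG (dD_persistR H isT)).
Qed.

Lemma truthful_bot : truthful Bot.
Proof. by move=> y; split=> [/dG_persistL/(_ isT)/sat_bot | _ []]. Qed.

Lemma truthful_and A B : truthful A -> truthful B -> truthful (And A B).
Proof.
move=> TA TB y; split=> H /=.
- by case/sat_andL: H => /(TA y).1 HA /(TB y).1 HB.
- by case/sat_andR: H => [/(TA y).2 nA [/nA] | /(TB y).2 nB [_ /nB]].
Qed.

Lemma truthful_or A B : truthful A -> truthful B -> truthful (Or A B).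
Proof.
move=> TA TB y; split=> H /=.
- by case/sat_orL: H => [/(TA y).1 | /(TB y).1]; [left | right].
- by case/sat_orR: H => /(TA y).2 nA /(TB y).2 nB [].
Qed.

Lemma truthful_imp A B : truthful A -> truthful B -> truthful (Imp A B).
Proof.
move=> TA TB y; split=> H /=.
- by move=> fA; case/sat_impL: H => [/(TB y).1 // | /(TA y).2 /(_ fA)].
- by case/sat_impR: H => /(TA y).1 fA /(TB y).2 nB /(_ fA).
Qed.

Lemma CondF_G_witness x a A B : truthful A -> truthful B ->
  dG (CondF x a A B) -> cnd_witness (rho x) (nbhd a) A B.
Proof.
move=> TA TB /sat_barL[c [Hcx Hca HcA HcI]]; exists (nbhd c); split.
- exact: nbhd_in_nbhds.
- exact: nbhd_subset.
- exact: dG_ExF_witness.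
- by move=> w Hw; apply: dG_AllF (truthful_imp TA TB) HcI Hw.
Qed.

Lemma CondF_D_no_witness x a A B : truthful A -> truthful B -> x <= n ->
  List.In (CondF x a A B) D -> ~ cnd_witness (rho x) (nbhd a) A B.
Proof.
move=> TA TB x_le HD [_ [/(nbhds_rho x_le)[c Hcx ->] sub_ca [w [Hw HwA]] HAB]].
case: (sat_barR Hcx (nbhd_subset_Sub Hw sub_ca) HD).
- by move=> HcA; apply: dD_ExF_no_witness TA HcA Hw HwA.
- by case/(dD_AllF (truthful_imp TA TB)) => y [Hy]; apply; apply: HAB.
Qed.

Lemma truthful_cnd A B : truthful A -> truthful B -> truthful (Cnd A B).
Proof.
move=> TA TB y; split=> H.
- move=> al /(nbhds_rho (dG_bound H))[a Hay ->] [w [Hw HwA]].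
  case: (sat_cndL Hay (dG_persistL H isT)) => [/dD_persistR/(_ isT) HD | [_ HC]].
  + by case: (dD_ExF_no_witness TA HD Hw HwA).
  + exact: CondF_G_witness.
- have [a [Hay HaA HD]] := sat_cndR H.
  move=> Hf; apply: (CondF_D_no_witness TA TB (dD_bound H) HD).
  by apply: Hf; [exact: nbhd_in_nbhds Hay | exact: dG_ExF_witness TA HaA].
Qed.

Lemma truth A : truthful A.
Proof.
elim: A => [p | | A TA B TB | A TA B TB | A TA B TB | A TA B TB].
- exact: truthful_atom.
- exact: truthful_bot.
- exact: truthful_and.
- exact: truthful_or.
- exact: truthful_imp.
- exact: truthful_cnd.
Qed.

Lemma lsat_dG F : dG F -> lsat (M := model) rho nbhd F.
Proof.
case: F => [a x | y a | a b | x A | a A | a A | x a A B] H /=.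
- exact: nbhd_in_nbhds (dG_persistL H isT).
- exact: rho_nbhd (dG_persistL H isT).
- exact: nbhd_subset (dG_persistL H isT).
- exact: (truth A x).1.
- by move=> w; apply: dG_AllF (truth A) (dG_persistL H isT).
- exact: dG_ExF_witness (truth A) H.
- split; first exact: nbhd_in_nbhds (dG_CondF_InN H).
  exact: CondF_G_witness (truth A) (truth B) H.
Qed.

Lemma lsat_dD F : dD F -> ~ lsat (M := model) rho nbhd F.
Proof.
case: F => [a x | y a | a b | x A | a A | a A | x a A B] H /=;
  try by have := dD_not_relational H.
- exact: (truth A x).2.
- by case: (dD_AllF (truth A) H) => w [Hw nA] /(_ w Hw).
- by case=> w [Hw]; apply: dD_ExF_no_witness (truth A) (dD_persistR H isT) Hw.
- case=> _; apply: CondF_D_no_witness (truth A) (truth B) _ (dD_persistR H isT).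
  exact: leq_trans (leq_maxl x a) (dD_bound H).
Qed.

Lemma countermodel : exists (M : nmodel) (rho : wlab -> W M) (sigma : nlab -> {set W M}),
  (forall F, dG F -> lsat rho sigma F) /\ (forall F, dD F -> ~ lsat rho sigma F).
Proof. by exists model, rho, nbhd; split; [exact: lsat_dG | exact: lsat_dD]. Qed.

End Countermodel.

Theorem mainTheorem17 (x0 : wlab) (A0 : form) (B : seq sequent) :
  is_branch x0 A0 B ->
  saturated B (upper x0 A0 B).1 (upper x0 A0 B).2 ->
  exists (M : nmodel) (rho : wlab -> W M) (sigma : nlab -> {set W M}),
    (forall F, downG B F -> lsat rho sigma F) /\
    (forall F, downD B F -> ~ lsat rho sigma F).
Proof.
move=> hB.
case=> sat_atom [sat_bot [sat_andL [sat_andR [sat_orL [sat_orR [sat_impL [sat_impR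
  [sat_ref [sat_tr [sat_sub [sat_allL [sat_allR [sat_exL [sat_exR
  [sat_cndR [sat_cndL [sat_barR [sat_barL _sat_mon]]]]]]]]]]]]]]]]]].
exact: (countermodel (downG_upper hB) (@downG_bound B) (@downD_bound B)
  (downG_persistL hB) (downD_persistR hB) (downD_not_relational hB)
  (downG_InN_ExF hB) (downG_CondF_InN hB)
  sat_atom sat_bot sat_andL sat_andR sat_orL sat_orR sat_impL (downD_impR hB sat_impR)
  sat_ref sat_tr sat_sub sat_allL sat_allR sat_exL sat_exR
  sat_cndR sat_cndL sat_barR sat_barL).
Qed.
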